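(* Let $n\ge 2$ be an integer and let $i$ be an odd integer with $3\le i\le 2^n-1$. Then $$v_2\big(s(2^n,i+1)\big)\ge v_2\big(s(2^n,i-1)\big)-2n+4.$$
   Context: The (unsigned) Stirling numbers of the first kind $s(n,k)$ are defined by $x(x+1)\cdots(x+n-1)=\sum_{k=0}^n s(n,k)x^k$. $v_2$ denotes the $2$-adic valuation. *)

From HB Require Import structures.
From mathcomp Require Import all_boot all_order all_algebra.
Set Implicit Arguments. Unset Strict Implicit. Unset Printing Implicit Defensive.
Import GRing.Theory.
Local Open Scope ring_scope.

Definition rising_poly (n : nat) : {poly nat} :=
  \prod_(j < n) ('X + j%:R%:P).

(* Unsigned Stirling number of the first kind: coefficient of x^k. *)
Definition stirling1 (n k : nat) : nat := nth 0%N (polyseq (rising_poly n)) k.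

(* 2-adic valuation of a natural number (v2 0 = 0 by convention of logn;
   the values used below are nonzero). *)
Definition v2 (m : nat) : nat := logn 2 m.

(* Put N = 2^(m+2). The rising factorial x(x+1)...(x+N-1) is the product of
   its even factors E(x) = x(x+2)...(x+N-2) and its odd factors
   O(x) = (x+1)(x+3)...(x+N-1). The coefficients of E are those of the rising
   factorial of length N/2 times powers of 2. Since O(x) = E(x+1), the
   even-degree coefficients of O have the 2-adic valuation of a binomial
   coefficient C(N/2, l); pairing the factors x+u and x+N-u shows that O is a
   polynomial in x(x+N), so its odd-degree coefficients are divisible by
   2^(2(m+1)). An explicit function [stirling_v2] then satisfies, by
   induction on n, 2^(stirling_v2 n k) | s(2^n, k) with equality of
   valuations for even k: in the convolution giving the coefficients of E O,
   exactly one term reaches this bound and all others exceed it. The theorem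
   is an inequality between the values of [stirling_v2] at the even
   neighbours i - 1 and i + 1 of i. *)

From mathcomp Require Import all_boot all_order all_algebra.
From mathcomp Require Import zify ring.
Import GRing.Theory.
Set Implicit Arguments. Unset Strict Implicit. Unset Printing Implicit Defensive.

Lemma dvdn_v2 k x : 0 < x -> (2 ^ k %| x) = (k <= v2 x).
Proof. by move=> x0; rewrite /v2 pfactor_dvdn. Qed.

Lemma dvdn_exp2_v2 x : 2 ^ v2 x %| x.
Proof. exact: pfactor_dvdnn. Qed.

Lemma v2_exp2 k : v2 (2 ^ k) = k.
Proof. by rewrite /v2 pfactorK. Qed.

Lemma v2_odd x : odd x -> v2 x = 0.
Proof. by move=> ox; rewrite /v2 logn_coprime // coprime2n. Qed.

Lemma v2_gt0 x : 0 < x -> ~~ odd x -> 0 < v2 x.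
Proof. by move=> x0 ex; rewrite -dvdn_v2 // expn1 dvdn2. Qed.

Lemma v2M x y : 0 < x -> 0 < y -> v2 (x * y) = v2 x + v2 y.
Proof. by move=> x0 y0; rewrite /v2 lognM. Qed.

Lemma exp2_v2_leq x : 0 < x -> 2 ^ v2 x <= x.
Proof. by move=> x0; apply: dvdn_leq => //; apply: dvdn_exp2_v2. Qed.

Lemma v2_ltn x : 0 < x -> v2 x < x.
Proof. by move=> x0; apply: leq_trans (exp2_v2_leq x0); apply: ltn_expl. Qed.

Lemma v2_ltn_exp2 x k : 0 < x -> x < 2 ^ k -> v2 x < k.
Proof.
by move=> x0 xk; rewrite -(ltn_exp2l _ _ (isT : 1 < 2)) (leq_ltn_trans (exp2_v2_leq x0)).
Qed.

Lemma v2_leq_exp2 x k : 0 < x -> x <= 2 ^ k -> v2 x <= k.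
Proof.
by move=> x0 xk; rewrite -(leq_exp2l _ _ (isT : 1 < 2)) (leq_trans (exp2_v2_leq x0)).
Qed.

Lemma v2D_ltl x y : 0 < x -> 0 < y -> v2 x < v2 y -> v2 (x + y) = v2 x.
Proof.
move=> x0 y0 lt_xy; have xy0 : 0 < x + y by lia.
have dvd_y : 2 ^ (v2 x).+1 %| y by rewrite dvdn_v2.
apply/anti_leq/andP; split.
  by rewrite leqNgt -dvdn_v2 // dvdn_addl // dvdn_v2 // ltnn.
rewrite -dvdn_v2 // dvdn_add ?dvdn_exp2_v2 //.
exact: dvdn_trans (dvdn_exp2l _ (leqnSn _)) dvd_y.
Qed.

Lemma v2D_neq x y : 0 < x -> 0 < y -> v2 x != v2 y ->
  v2 (x + y) = minn (v2 x) (v2 y).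
Proof.
move=> x0 y0; case: (ltngtP (v2 x) (v2 y)) => // lt_xy _.
  by rewrite v2D_ltl //; lia.
by rewrite addnC v2D_ltl //; lia.
Qed.

Lemma v2_exp2_sub m e : 0 < e < 2 ^ m -> v2 (2 ^ m - e) = v2 e.
Proof.
move=> /andP[e0 em].
have v2_summand_leq a b : 0 < a -> 0 < b -> a + b = 2 ^ m -> v2 a <= v2 b.
  move=> a0 b0 ab.
  have : 2 ^ v2 a %| 2 ^ m by rewrite dvdn_exp2l // ltnW // v2_ltn_exp2 //; lia.
  by rewrite -ab dvdn_addr ?dvdn_exp2_v2 // dvdn_v2.
by apply/anti_leq; rewrite !v2_summand_leq //; lia.
Qed.

Lemma double_leq_exp2 m : m.*2 <= 2 ^ m.
Proof. by elim: m => // [[|[|m]]] // IH; rewrite expnS; lia. Qed.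

Lemma exp2_even n : 0 < n -> ~~ odd (2 ^ n).
Proof. by case: n => // n _; rewrite expnS oddM. Qed.

Lemma dvdn_exp2W a b x : a <= b -> 2 ^ b %| x -> 2 ^ a %| x.
Proof. by move=> ab; apply: dvdn_trans; rewrite dvdn_exp2l. Qed.

Lemma dvdn_exp2M a b x y : 2 ^ a %| x -> 2 ^ b %| y -> 2 ^ (a + b) %| x * y.
Proof. by move=> ax bx; rewrite expnD dvdn_mul. Qed.

(* [exact_v2 e x] excludes the junk value [v2 0 = 0]. *)
Definition exact_v2 e x := (0 < x) && (v2 x == e).

Lemma exact_v2E e x : exact_v2 e x -> v2 x = e.
Proof. by case/andP => _ /eqP. Qed.

Lemma exact_v2_dvdn e x : exact_v2 e x -> 2 ^ e %| x.
Proof. by case/andP => _ /eqP <-; apply: dvdn_exp2_v2. Qed.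

Lemma exact_v2M e1 e2 x y :
  exact_v2 e1 x -> exact_v2 e2 y -> exact_v2 (e1 + e2) (x * y).
Proof.
case/andP => x0 /eqP <-; case/andP => y0 /eqP <-.
by rewrite /exact_v2 muln_gt0 x0 y0 v2M // eqxx.
Qed.

Lemma exact_v2_exp2 k : exact_v2 k (2 ^ k).
Proof. by rewrite /exact_v2 expn_gt0 v2_exp2 eqxx. Qed.

Lemma exact_v2_odd x : exact_v2 0 x = odd x.
Proof.
rewrite /exact_v2; case: (boolP (odd x)) => ox; first by rewrite v2_odd // eqxx; case: x ox.
by case: (posnP x) => //= x0; have := v2_gt0 x0 ox; case: (v2 x).
Qed.

Lemma exact_v2D e y z : exact_v2 e y -> 2 ^ e.+1 %| z -> exact_v2 e (y + z).
Proof.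
move=> ey dz; have /andP[y0 _] := ey; have yz0 : 0 < y + z by lia.
rewrite /exact_v2 yz0; apply/eqP/anti_leq/andP; split.
  by rewrite leqNgt -dvdn_v2 // dvdn_addl // dvdn_v2 // (exact_v2E ey) ltnn.
rewrite -dvdn_v2 // dvdn_add ?(exact_v2_dvdn ey) //.
exact: dvdn_exp2W (leqnSn e) dz.
Qed.
Lemma odd_bin_exp2_pred m i : i <= 2 ^ m - 1 -> odd 'C(2 ^ m - 1, i).
Proof.
elim: i => [|i IH] im; first by rewrite bin0.
have odd_prev := IH ltac:(lia).
have := congr1 v2 (mul_bin_left (2 ^ m - 1) i).
have -> : 2 ^ m - 1 - i = 2 ^ m - i.+1 by lia.
have Ci_gt0 : 0 < 'C(2 ^ m - 1, i) by case: ('C(_, _)) odd_prev.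
have CSi_gt0 : 0 < 'C(2 ^ m - 1, i.+1) by rewrite bin_gt0; lia.
rewrite !v2M // ?v2_exp2_sub ?(v2_odd odd_prev) -?exact_v2_odd /exact_v2 ?CSi_gt0; lia.
Qed.

Lemma exact_v2_bin_exp2 m l : 0 < l <= 2 ^ m -> exact_v2 (m - v2 l) 'C(2 ^ m, l).
Proof.
move=> /andP[l0 lm].
have := congr1 v2 (mul_bin_diag (2 ^ m) l.-1).
have odd_C := odd_bin_exp2_pred (i := l.-1) (ltac:(lia) : l.-1 <= 2 ^ m - 1).
have C_gt0 : 0 < 'C(2 ^ m - 1, l.-1) by case: ('C(_, _)) odd_C.
rewrite prednK // -subn1 v2M ?expn_gt0 // v2M ?bin_gt0 // v2_exp2 (v2_odd odd_C).
have := v2_leq_exp2 l0 lm.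
by rewrite /exact_v2 bin_gt0 lm; lia.
Qed.

Lemma dvdn_exp2_v2_bin t q : 0 < t -> odd q -> 2 ^ v2 t %| 'C(t, q).
Proof.
move=> t0 oq; have q0 : 0 < q by case: q oq.
have : 2 ^ v2 t %| q * 'C(t, q).
  by have := mul_bin_diag t q.-1; rewrite prednK // => <-; rewrite dvdn_mulr // dvdn_exp2_v2.
by rewrite Gauss_dvdr // coprimeXl // coprime2n.
Qed.

(* [p`_i] in [nat_scope], so that coefficient arithmetic stays in [nat]. *)
Notation "p `_ i" := (nth 0 (polyseq p) i) : nat_scope.

Lemma coefM_nat (p q : {poly nat}) k :
  (p * q)%R`_k = \sum_(j < k.+1) p`_j * q`_(k - j).
Proof. exact: coefM. Qed.

Lemma coef_comp_nat (p q : {poly nat}) l :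
  (p \Po q)%R`_l = \sum_(i < size p) p`_i * (q ^+ i)%R`_l.
Proof. exact: coef_comp_poly. Qed.

Lemma coef_mulXaddC (p : {poly nat}) (c : nat) k :
  (p * ('X + c%:P))%R`_k = (if k is k'.+1 then p`_k' else 0) + p`_k * c.
Proof. by rewrite mulrDr coefD coefMX coefMC; case: k. Qed.

Lemma coef_XaddC_exp (c : nat) t s :
  (('X + c%:P) ^+ t)%R`_s = 'C(t, s) * c ^ (t - s).
Proof.
elim: t s => [|t IH] [|s]; rewrite ?expr0 ?coef1 // exprSr coef_mulXaddC !IH.
  by rewrite !bin0 add0n subn0 expnS; ring.
rewrite binS; case: (ltngtP s t) => [st|ts|->]; last 2 first.
- by rewrite !bin_small ?mul0n //; lia.
- by rewrite (bin_small (ltnSn t)) binn !subnn; ring.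
have -> : t.+1 - s.+1 = (t - s.+1).+1 by lia.
have -> : t - s = (t - s.+1).+1 by lia.
by rewrite expnS; ring.
Qed.

Lemma coef_quad_exp (N t l : nat) :
  (('X * ('X + N%:P)) ^+ t)%R`_l =
  if l < t then 0 else 'C(t, l - t) * N ^ (t - (l - t)).
Proof. by rewrite exprMn coefXnM; case: ifP => // _; rewrite coef_XaddC_exp. Qed.

Definition linprod (c : nat -> nat) (M : nat) : {poly nat} :=
  (\prod_(j < M) ('X + (c j)%:P))%R.

Lemma linprodS c M : linprod c M.+1 = (linprod c M * ('X + (c M)%:P))%R.
Proof. by rewrite /linprod big_ord_recr. Qed.

Lemma coef_linprod_gt c M k : M < k -> (linprod c M)`_k = 0.
Proof.
elim: M k => [|M IH] k Mk; first by rewrite /linprod big_ord0 coef1; case: k Mk.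
by rewrite linprodS coef_mulXaddC IH; [case: k Mk => // k Mk; rewrite IH|]; lia.
Qed.

Lemma coef_linprod_top c M : (linprod c M)`_M = 1.
Proof.
elim: M => [|M IH]; first by rewrite /linprod big_ord0 coef1.
by rewrite linprodS coef_mulXaddC IH coef_linprod_gt.
Qed.

Lemma coef_linprod0 c M : (linprod c M)`_0 = \prod_(j < M) c j.
Proof.
elim: M => [|M IH]; first by rewrite /linprod !big_ord0 coef1.
by rewrite linprodS coef_mulXaddC IH big_ord_recr.
Qed.

Lemma size_linprod c M : size (linprod c M) = M.+1.
Proof.
apply/anti_leq/andP; split; first by apply/leq_sizeP => j /coef_linprod_gt.
by rewrite ltnNge; apply/negP => /leq_sizeP /(_ M (leqnn _)); rewrite coef_linprod_top.
Qed.

Lemma coef_linprod_scale s M k :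
  (linprod (fun j => s * j) M)`_k = s ^ (M - k) * (linprod id M)`_k.
Proof.
elim: M k => [|M IH] [|k]; rewrite ?linprodS ?coef_mulXaddC ?IH.
- by rewrite /linprod !big_ord0 !coef1 expn0 mul1n.
- by rewrite !coef_linprod_gt ?muln0.
- by rewrite !add0n subn0 expnS /=; ring.
case: (ltngtP M k) => [Mk|kM|<-].
- by rewrite !coef_linprod_gt //; lia.
- rewrite subSS; have -> : M - k = (M - k.+1).+1 by lia.
  by rewrite expnS; ring.
by rewrite subSS subnn (coef_linprod_gt _ (ltnSn M)) !muln0 !addn0.
Qed.

Lemma linprod_shift1 c M : linprod (fun j => c j + 1) M = (linprod c M \Po ('X + 1))%R.
Proof.
rewrite /linprod rmorph_prod; apply: eq_bigr => j _ /=.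
by rewrite comp_polyD comp_polyX comp_polyC polyCD polyC1 addrA addrAC.
Qed.

Lemma coef_linprod_shift1 c M l :
  (linprod (fun j => c j + 1) M)`_l = \sum_(i < M.+1) (linprod c M)`_i * 'C(i, l).
Proof.
rewrite linprod_shift1 coef_comp_nat size_linprod; apply: eq_bigr => i _.
by rewrite -polyC1 coef_XaddC_exp exp1n muln1.
Qed.

Lemma linprod_double c M :
  linprod c (2 * M) =
  (linprod (fun j => c (2 * j)%N) M * linprod (fun j => c (2 * j + 1)%N) M)%R.
Proof.
elim: M => [|M IH]; first by rewrite /linprod !big_ord0 mulr1.
rewrite (_ : 2 * M.+1 = (2 * M).+2) ?mulnS // !linprodS IH addn1 -!mulrA.
congr (_ * _)%R.
by rewrite mulrCA.
Qed.

Lemma linprod_pair c M :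
  linprod c (2 * M) =
  (\prod_(i < M) (('X + (c (M - i.+1)%N)%:P) * ('X + (c (i + M)%N)%:P)))%R.
Proof.
rewrite /linprod -(big_mkord xpredT (fun j => 'X + (c j)%:P)%R).
rewrite (big_cat_nat _ (n := M)) //=; last by lia.
rewrite big_nat_rev /= -{3}(add0n M) big_addn (_ : 2 * M - M = M); last by lia.
by rewrite -big_split big_mkord; apply: eq_bigr => i _; rewrite add0n.
Qed.

Lemma XaddC_pair (u v : nat) :
  (('X + u%:P) * ('X + v%:P) = 'X * ('X + (u + v)%N%:P) + (u * v)%N%:P :> {poly nat})%R.
Proof. by rewrite polyCD polyCM; ring. Qed.

Lemma linprod_comp_quad (d : nat -> nat) M (N : nat) :
  (linprod d M \Po ('X * ('X + N%:P)))%R =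
  (\prod_(j < M) ('X * ('X + N%:P) + (d j)%:P))%R.
Proof.
rewrite /linprod rmorph_prod; apply: eq_bigr => j _ /=.
by rewrite comp_polyD comp_polyX comp_polyC.
Qed.

(* For k <= 2^(n-1) the dominant term in s(2^n, k) is x^k from the even
   factors times the constant term of the odd factors; for larger k it is
   x^(2^(n-1)) from the even factors times a coefficient of the odd ones. *)
Fixpoint stirling_v2 (n k : nat) : nat :=
  if n is n'.+1 then
    if k <= 2 ^ n' then stirling_v2 n' k + (2 ^ n' - k)
    else if odd k then n'.*2 - v2 (k.+1 - 2 ^ n')
    else n' - v2 (k - 2 ^ n')
  else 0.

(* Valuation bound for the coefficient of x^l in the product of the 2^m odd
   factors (x + 1)(x + 3)...(x + 2^(m+1) - 1). *)
Definition oddpart_v2 m l :=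
  if l == 0 then 0 else if odd l then m.*2 else m - v2 l.

Lemma stirling_v2_lo n k : k <= 2 ^ n ->
  stirling_v2 n.+1 k = stirling_v2 n k + (2 ^ n - k).
Proof. by move=> /= ->. Qed.

Lemma stirling_v2_hi n k : 2 ^ n < k -> stirling_v2 n.+1 k =
  if odd k then n.*2 - v2 (k.+1 - 2 ^ n) else n - v2 (k - 2 ^ n).
Proof. by move=> /= nk; rewrite leqNgt nk. Qed.

Lemma stirling_v2_hi_leq n k : 2 ^ n < k -> stirling_v2 n.+1 k <= n.*2.
Proof. by move=> nk; rewrite stirling_v2_hi //; case: ifP => _; lia. Qed.

Lemma stirling_v2_top n : stirling_v2 n (2 ^ n) = 0.
Proof.
case: n => // n; rewrite stirling_v2_hi ?ltn_exp2l // expnS.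
by rewrite oddM /= mul2n -addnn addnK v2_exp2; lia.
Qed.

Lemma stirling_v2_hi_even n a : 0 < a <= 2 ^ n -> ~~ odd a ->
  stirling_v2 n.+1 (2 ^ n + a) = oddpart_v2 n a.
Proof.
move=> /andP[a0 an] ea; rewrite stirling_v2_hi; last by lia.
case: n an => [|n] an; first by move: ea; have -> : a = 1 by lia.
rewrite oddD (negbTE (exp2_even _)) // (negbTE ea) /oddpart_v2 /= addKn.
by rewrite (negbTE ea); case: eqP => //; lia.
Qed.

Lemma stirling_v2_hi_odd n a : 0 < a <= 2 ^ n -> ~~ odd a ->
  stirling_v2 n.+1 (2 ^ n + a - 1) = n + oddpart_v2 n a.
Proof.
move=> /andP[a0 an] ea.
case: n an => [|n] an; first by move: ea; have -> : a = 1 by lia.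
have a2 : 2 <= a by case: a a0 ea {an} => [|[]].
rewrite stirling_v2_hi; last by lia.
have -> : (2 ^ n.+1 + a - 1).+1 - 2 ^ n.+1 = a by lia.
have -> : odd (2 ^ n.+1 + a - 1).
  have -> : 2 ^ n.+1 + a - 1 = 2 ^ n.+1 + a.-1 by lia.
  rewrite oddD (negbTE (exp2_even _)) //=.
  by move: ea; rewrite -(prednK a0) /= negbK.
rewrite /oddpart_v2 (negbTE ea); case: eqP; first by lia.
by have := v2_leq_exp2 a0 an; lia.
Qed.

Lemma stirling_v2_ge n j : 0 < j < 2 ^ n -> n <= stirling_v2 n.+1 j.
Proof.
move=> /andP[j0 jn]; rewrite stirling_v2_lo; last by lia.
case: n jn => [|m] jn; first by lia.
have m_lt := ltn_expl m (isT : 1 < 2).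
rewrite expnS mul2n -addnn in jn *.
case: (leqP j (2 ^ m)) => jm; first by lia.
set x := j - 2 ^ m.
have x0 : 0 < x < 2 ^ m by lia.
have -> : j = 2 ^ m + x by lia.
case: (boolP (odd x)) => ox.
  rewrite (_ : 2 ^ m + x = 2 ^ m + x.+1 - 1); last by lia.
  by rewrite stirling_v2_hi_odd /= ?ox //; lia.
rewrite stirling_v2_hi_even //; last by lia.
rewrite /oddpart_v2 (negbTE ox); case: eqP => [|_]; first by lia.
have xv : v2 x < m by apply: v2_ltn_exp2; lia.
have : 2 ^ v2 x <= 2 ^ m - x.
  by apply: dvdn_leq; [lia | rewrite dvdn_sub // ?dvdn_exp2_v2 ?dvdn_exp2l //; lia].
by have := ltn_expl (v2 x) (isT : 1 < 2); lia.
Qed.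

Lemma stirling_v2_lt_shift_hi n j k : 0 < j < k -> 2 ^ n < k -> k <= 2 ^ n.+1 ->
  stirling_v2 n.+1 k < stirling_v2 n.+1 j + (k - j) + oddpart_v2 n.+1 (k - j).
Proof.
move=> /andP[j0 jk] kH; rewrite expnS mul2n -addnn => kn.
set d := k - j; have d0 : 0 < d by lia.
have vodd : oddpart_v2 n.+1 d = if odd d then n.+1.*2 else n.+1 - v2 d.
  by rewrite /oddpart_v2; case: eqP => //; lia.
have v2d_lt := v2_ltn d0.
have Fk := stirling_v2_hi_leq kH.
case: (ltngtP j (2 ^ n)) => jH.
- have := stirling_v2_ge (n := n) (j := j) ltac:(lia).
  by rewrite vodd; case: ifP => _; lia.
- case: n kn kH jH Fk vodd => [|n] kn kH jH Fk vodd; first by lia.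
  have Hev := exp2_even (isT : 0 < n.+1).
  rewrite !stirling_v2_hi //.
  have vj1 : v2 (j - 2 ^ n.+1) < n.+1 by apply: v2_ltn_exp2; lia.
  have vj2 : j.+1 < 2 ^ n.+1 + 2 ^ n.+1 -> v2 (j.+1 - 2 ^ n.+1) < n.+1.
    by move=> jl; apply: v2_ltn_exp2; lia.
  rewrite vodd; case: (boolP (odd d)) => od.
    by move: Fk; rewrite stirling_v2_hi //; case: ifP => _; case: ifP => _; lia.
  have pj : odd j = odd k.
    by rewrite (_ : k = j + d) ?oddD ?(negbTE od) ?addbF //; lia.
  rewrite pj; case: ifP => ok; last by lia.
  have : k != 2 ^ n.+1 + 2 ^ n.+1.
    apply/eqP => E; move: ok; rewrite E addnn -mul2n -expnS.
    by rewrite (negbTE (exp2_even _)).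
  by have := vj2 ltac:(lia); lia.
- rewrite jH (stirling_v2_lo (k := 2 ^ n)) // stirling_v2_top subnn addn0 add0n.
  rewrite vodd; case: (boolP (odd d)) => od; first by lia.
  rewrite stirling_v2_hi //.
  have ok : ~~ odd k.
    case: n kn kH jH Fk vodd => [|n] kn kH jH Fk vodd; first by lia.
    rewrite (_ : k = 2 ^ n.+1 + d); last by lia.
    by rewrite oddD (negbTE (exp2_even _)) // (negbTE od).
  rewrite (negbTE ok); have -> : k - 2 ^ n = d by lia.
  lia.
Qed.

Lemma stirling_v2_lt_shift n j k : 0 < j < k -> k <= 2 ^ n ->
  stirling_v2 n k < stirling_v2 n j + (k - j) + oddpart_v2 n (k - j).
Proof.
elim: n j k => [|n IH] j k /andP[j0 jk] kn; first by lia.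
case: (leqP k (2 ^ n)) => kH; last by apply: stirling_v2_lt_shift_hi => //; apply/andP.
have := IH j k ltac:(lia) kH.
rewrite !stirling_v2_lo; try lia.
by rewrite /oddpart_v2; case: eqP => _; [lia | case: ifP => _; lia].
Qed.

Lemma stirling_v2_lt_conv_lo n j k : 0 < j < k -> k <= 2 ^ n ->
  stirling_v2 n.+1 k < stirling_v2 n.+1 j + oddpart_v2 n (k - j).
Proof.
move=> jk kn; have := stirling_v2_lt_shift jk kn.
by rewrite !stirling_v2_lo //; lia.
Qed.

Lemma stirling_v2_exp2_sub_even n d : 0 < d -> ~~ odd d -> d < 2 ^ n.+1 ->
  n.+2 <= stirling_v2 n.+2 (2 ^ n.+1 - d) + v2 d.
Proof.
move=> d0 ed dn; rewrite stirling_v2_lo; last by lia.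
have v1 := v2_gt0 d0 ed.
have -> : 2 ^ n.+1 - (2 ^ n.+1 - d) = d by lia.
case: (leqP (2 ^ n) d) => dn2; first by have := ltn_expl n (isT : 1 < 2); lia.
case: n dn dn2 => [|n] dn dn2; first by lia.
have -> : 2 ^ n.+2 - d = 2 ^ n.+1 + (2 ^ n.+1 - d) by rewrite expnS; lia.
rewrite stirling_v2_hi_even; first last.
- by rewrite oddB ?(negbTE ed) ?(negbTE (exp2_even _)) //; lia.
- by lia.
rewrite /oddpart_v2; case: eqP; first by lia.
rewrite oddB; last by lia.
rewrite (negbTE ed) (negbTE (exp2_even _)) //= => _.
rewrite v2_exp2_sub; lia.
Qed.

Lemma stirling_v2_exp2_pred n : stirling_v2 n.+2 (2 ^ n.+1 - 1) = n.+1.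
Proof.
rewrite stirling_v2_lo; last by lia.
have -> : 2 ^ n.+1 - (2 ^ n.+1 - 1) = 1 by have := ltn_expl n.+1 (isT : 1 < 2); lia.
case: n => [|n] //.
have -> : 2 ^ n.+2 - 1 = 2 ^ n.+1 + 2 ^ n.+1 - 1 by rewrite expnS; lia.
rewrite stirling_v2_hi_odd; last by apply: exp2_even.
  by rewrite /oddpart_v2; case: eqP; [lia | rewrite (negbTE (exp2_even _)) // v2_exp2; lia].
by have := ltn_expl n.+1 (isT : 1 < 2); lia.
Qed.

Lemma stirling_v2_exp2_sub_odd n d : odd d -> 3 <= d -> d < 2 ^ n ->
  stirling_v2 n.+2 (2 ^ n.+1 - d) = n.*2 - v2 d.-1 + d.
Proof.
move=> od d3 dn; rewrite stirling_v2_lo; last by lia.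
have -> : 2 ^ n.+1 - (2 ^ n.+1 - d) = d by rewrite expnS; lia.
have -> : 2 ^ n.+1 - d = 2 ^ n + (2 ^ n - d.-1) - 1 by rewrite expnS; lia.
have ea : ~~ odd (2 ^ n - d.-1).
  have n0 : 0 < n by case: n dn => //; lia.
  rewrite oddB; last by lia.
  rewrite (negbTE (exp2_even n0)) /=.
  have d0 : 0 < d by lia.
  by move: od; rewrite -(prednK d0) /=.
rewrite stirling_v2_hi_odd //; last by lia.
rewrite /oddpart_v2; case: eqP; first by lia.
rewrite (negbTE ea) v2_exp2_sub; last by lia.
move=> _; have := v2_ltn_exp2 (x := d.-1) (k := n) ltac:(lia) ltac:(lia); lia.
Qed.

Lemma conv_ineq_hi_even n a j : 0 < a -> ~~ odd a -> a <= j -> j < 2 ^ n.+1 ->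
  oddpart_v2 n.+1 a < stirling_v2 n.+2 j + oddpart_v2 n.+1 (2 ^ n.+1 + a - j).
Proof.
move=> a0 ea aj jn.
have va1 := v2_gt0 a0 ea.
have va2 : v2 a < n.+1 by apply: v2_ltn_exp2; lia.
have Fj := stirling_v2_ge (n := n.+1) (j := j) ltac:(lia).
set d := 2 ^ n.+1 - j.
have -> : 2 ^ n.+1 + a - j = a + d by lia.
have d0 : 0 < d by lia.
rewrite /oddpart_v2; case: eqP; first by lia.
rewrite (negbTE ea) => _.
case: eqP; first by lia.
move=> _; rewrite oddD (negbTE ea) addFb.
case: (boolP (odd d)) => od; first by lia.
have vl : v2 (a + d) <= n.+1 by apply: v2_leq_exp2; lia.
case: (eqVneq (v2 a) (v2 d)) => ead.
  have dn : d < 2 ^ n.+1 by rewrite /d; lia.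
  have := stirling_v2_exp2_sub_even d0 od dn.
  have -> : 2 ^ n.+1 - d = j by rewrite /d; lia.
  lia.
by rewrite v2D_neq //; lia.
Qed.

Lemma conv_ineq_hi_odd_far n a d : 0 < a -> ~~ odd a -> a + d.-1 <= 2 ^ n.+1 ->
  odd d -> 3 <= d -> d < 2 ^ n.+1 ->
  n.+1 + (n.+1 - v2 a) <= stirling_v2 n.+2 (2 ^ n.+1 - d) + (n.+1 - v2 (a + d.-1)).
Proof.
move=> a0 ea an od d3 dn.
set e := d.-1; have e0 : 0 < e by lia.
have ee : ~~ odd e by move: od; rewrite /e -(prednK (ltnW (ltnW d3))) /=.
have := stirling_v2_ge (n := n.+1) (j := 2 ^ n.+1 - d) ltac:(lia).
have := v2_gt0 a0 ea; have := v2_gt0 e0 ee.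
have : v2 (a + e) <= n.+1 by apply: v2_leq_exp2; lia.
case: (eqVneq (v2 a) (v2 e)) => ead; last by rewrite v2D_neq //; lia.
case: (ltnP d (2 ^ n)) => dn2.
  rewrite stirling_v2_exp2_sub_odd // -/e.
  by have := v2_ltn_exp2 (x := e) (k := n) e0 ltac:(lia); lia.
(* Otherwise the factor 2^d of the even part alone is large enough. *)
have : d <= stirling_v2 n.+2 (2 ^ n.+1 - d).
  by rewrite stirling_v2_lo; lia.
have dne : d != 2 ^ n.
  case: (posnP n) => [n0|n0]; first by rewrite n0; apply/eqP; lia.
  by apply/eqP => E; move: od; rewrite E (negbTE (exp2_even n0)).
by have := double_leq_exp2 n; rewrite expnS in dn; lia.
Qed.

Lemma conv_ineq_hi_odd n a j : 0 < a -> ~~ odd a -> a <= 2 ^ n.+1 -> 0 < j ->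
  a.-1 <= j -> j <= 2 ^ n.+1 ->
  n.+1 + oddpart_v2 n.+1 a <= stirling_v2 n.+2 j + oddpart_v2 n.+1 (2 ^ n.+1 + a.-1 - j).
Proof.
move=> a0 ea an j0 aj jn.
have va : v2 a <= n.+1 by apply: v2_leq_exp2; lia.
have a2 : 2 <= a by case: a a0 ea {an aj va} => [|[]].
have oa : odd a.-1 by move: ea; rewrite -(prednK a0) /= negbK.
set d := 2 ^ n.+1 - j.
have -> : 2 ^ n.+1 + a.-1 - j = a.-1 + d by lia.
rewrite /oddpart_v2 (negbTE ea) ifF; last by apply/eqP; lia.
case: (posnP d) => [d0|d0].
  rewrite (_ : j = 2 ^ n.+1); last by lia.
  by rewrite stirling_v2_lo // stirling_v2_top subnn d0 !addn0 oa; case: eqP; lia.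
rewrite ifF; last by apply/eqP; lia.
case: (boolP (odd (a.-1 + d))) => ol; first by lia.
have od : odd d by move: ol; rewrite oddD oa /= negbK.
case: (eqVneq d 1) => d1.
  rewrite (_ : j = 2 ^ n.+1 - 1) ?stirling_v2_exp2_pred; last by lia.
  by rewrite (_ : a.-1 + d = a); lia.
rewrite (_ : a.-1 + d = a + d.-1); last by lia.
rewrite (_ : j = 2 ^ n.+1 - d); last by lia.
have d3 : 3 <= d by move: od d0 d1; case: (d) => [|[|[]]].
by apply: conv_ineq_hi_odd_far => //; lia.
Qed.

Lemma stirling_v2_conv_hi_odd n j k : odd k -> 2 ^ n.+1 < k <= 2 ^ n.+2 ->
  0 < j <= 2 ^ n.+1 -> k - j <= 2 ^ n.+1 ->
  stirling_v2 n.+2 k <= stirling_v2 n.+2 j + oddpart_v2 n.+1 (k - j).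
Proof.
move=> ok /andP[kH kn] /andP[j0 jn] kjn.
have e2 : 2 ^ n.+2 = 2 ^ n.+1 + 2 ^ n.+1 by rewrite expnS; lia.
set a := k - 2 ^ n.+1 + 1.
have ea : ~~ odd a.
  by rewrite /a addn1 /= oddB ?ok ?(negbTE (exp2_even _)) //; lia.
have kne : k != 2 ^ n.+2.
  by apply/eqP => E; move: ok; rewrite E (negbTE (exp2_even _)).
have a0 : 0 < a <= 2 ^ n.+1 by lia.
have := stirling_v2_hi_odd (n := n.+1) a0 ea.
rewrite (_ : 2 ^ n.+1 + a - 1 = k); last by lia.
move=> ->; have := conv_ineq_hi_odd (n := n) (a := a) (j := j).
by rewrite (_ : 2 ^ n.+1 + a.-1 - j = k - j); lia.
Qed.

Lemma stirling_v2_conv_hi_even n j k : ~~ odd k -> 2 ^ n.+1 < k <= 2 ^ n.+2 ->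
  0 < j <= 2 ^ n.+1 -> k - j <= 2 ^ n.+1 ->
  stirling_v2 n.+2 k <= stirling_v2 n.+2 j + oddpart_v2 n.+1 (k - j) /\
  (j != 2 ^ n.+1 -> stirling_v2 n.+2 k < stirling_v2 n.+2 j + oddpart_v2 n.+1 (k - j)).
Proof.
move=> ek /andP[kH kn] /andP[j0 jn] kjn.
have e2 : 2 ^ n.+2 = 2 ^ n.+1 + 2 ^ n.+1 by rewrite expnS; lia.
set a := k - 2 ^ n.+1.
have ea : ~~ odd a by rewrite /a oddB ?(negbTE ek) ?(negbTE (exp2_even _)) //; lia.
have a0 : 0 < a <= 2 ^ n.+1 by lia.
have := stirling_v2_hi_even (n := n.+1) a0 ea.
rewrite (_ : 2 ^ n.+1 + a = k); last by lia.
move=> ->; case: (eqVneq j (2 ^ n.+1)) => [->|jne].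
  by rewrite stirling_v2_lo // stirling_v2_top subnn /= -/a; split=> // /eqP.
have := conv_ineq_hi_even (n := n) (a := a) (j := j) ltac:(lia) ea ltac:(lia) ltac:(lia).
have -> : 2 ^ n.+1 + a - j = k - j by lia.
by split => //; lia.
Qed.

(* The right-hand sides bound the valuation of the term of index j in the
   convolution giving the coefficient of x^k in E O. *)
Lemma stirling_v2_conv n j k : 0 < j <= k -> k <= 2 ^ n.+2 -> j <= 2 ^ n.+1 ->
  k - j <= 2 ^ n.+1 ->
  stirling_v2 n.+2 k <= stirling_v2 n.+2 j + oddpart_v2 n.+1 (k - j) /\
  (~~ odd k -> j != minn k (2 ^ n.+1) ->
     stirling_v2 n.+2 k < stirling_v2 n.+2 j + oddpart_v2 n.+1 (k - j)).
Proof.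
move=> /andP[j0 jk] kn jn kjn.
case: (leqP k (2 ^ n.+1)) => kH.
  case: (eqVneq j k) => [->|jk'].
    by rewrite subnn /oddpart_v2 /= addn0; split=> // _; rewrite eqxx.
  have lt_conv := stirling_v2_lt_conv_lo (n := n.+1) (j := j) (k := k) ltac:(lia) kH.
  by split=> //; apply: ltnW.
case: (boolP (odd k)) => ok.
  by split=> //; apply: stirling_v2_conv_hi_odd => //; lia.
have [le_conv lt_conv] := stirling_v2_conv_hi_even ok (ltac:(lia) : 2 ^ n.+1 < k <= 2 ^ n.+2)
  (ltac:(lia) : 0 < j <= 2 ^ n.+1) kjn.
by split=> // _.
Qed.

Lemma stirling_v2_add2 n k : ~~ odd k -> 2 <= k -> k + 2 <= 2 ^ n.+2 ->
  stirling_v2 n.+2 k <= stirling_v2 n.+2 (k + 2) + n.*2.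
Proof.
elim: n k => [|n IH] k ek k2 kn; first by rewrite (_ : k = 2) //; lia.
have Hev : ~~ odd (2 ^ n.+2) by apply: exp2_even.
case: (ltngtP k (2 ^ n.+2)) => kH.
- have k2H : k + 2 <= 2 ^ n.+2.
    have : k.+1 != 2 ^ n.+2 by apply/eqP => E; move: Hev; rewrite -E /= ek.
    lia.
  rewrite (stirling_v2_lo (k := k)) 1?(stirling_v2_lo (k := k + 2)) //; last by lia.
  by have := IH k ek k2 k2H; lia.
- rewrite stirling_v2_hi // (negbTE ek).
  have : 0 < v2 (k - 2 ^ n.+2).
    by apply: v2_gt0; rewrite ?oddB ?(negbTE ek) ?(negbTE Hev) //; lia.
  lia.
- by rewrite kH (stirling_v2_lo (k := 2 ^ n.+2)) // stirling_v2_top subnn.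
Qed.

Lemma rising_poly_linprod n : rising_poly n = linprod id n.
Proof. by rewrite /rising_poly /linprod; apply: eq_bigr => j _; rewrite natn. Qed.

Definition even_factors m := linprod (fun j => 2 * j) (2 ^ m.+1).
Definition odd_factors m := linprod (fun j => 2 * j + 1) (2 ^ m.+1).

(* Pairing the odd factors x + u and x + (2^(m+2) - u). *)
Definition odd_pair_factors m :=
  linprod (fun i => (2 * (2 ^ m - i.+1) + 1) * (2 * (i + 2 ^ m) + 1)) (2 ^ m).

Lemma rising_poly_even_odd m :
  rising_poly (2 ^ m.+2) = (even_factors m * odd_factors m)%R.
Proof. by rewrite rising_poly_linprod expnS linprod_double. Qed.

Lemma coef_even_factors m k :
  (even_factors m)`_k = 2 ^ (2 ^ m.+1 - k) * stirling1 (2 ^ m.+1) k.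
Proof. by rewrite /even_factors coef_linprod_scale /stirling1 rising_poly_linprod. Qed.

Lemma coef_even_factors0 m : (even_factors m)`_0 = 0.
Proof.
rewrite /even_factors coef_linprod0 -(prednK (expn_gt0 2 m.+1)).
by rewrite big_ord_recl muln0 mul0n.
Qed.

Lemma coef_odd_factors_shift m l :
  (odd_factors m)`_l = \sum_(i < (2 ^ m.+1).+1) (even_factors m)`_i * 'C(i, l).
Proof. exact: (coef_linprod_shift1 (fun j => 2 * j)). Qed.

Lemma odd_factors_quad m :
  odd_factors m = (odd_pair_factors m \Po ('X * ('X + (2 ^ m.+2)%N%:P)))%R.
Proof.
rewrite /odd_factors /odd_pair_factors linprod_comp_quad expnS linprod_pair.
apply: eq_bigr => i _; rewrite XaddC_pair.
by have := ltn_ord i; rewrite !expnS => i_lt; congr (_ * (_ + _%:P) + _)%R; lia.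
Qed.

Lemma coef_odd_factors_quad m l :
  (odd_factors m)`_l = \sum_(t < (2 ^ m).+1) (odd_pair_factors m)`_t *
    (if l < t then 0 else 'C(t, l - t) * (2 ^ m.+2) ^ (t - (l - t))).
Proof.
rewrite odd_factors_quad coef_comp_nat /odd_pair_factors size_linprod.
by apply: eq_bigr => t _; rewrite coef_quad_exp.
Qed.

Definition stirling_v2_spec n := forall k, 0 < k <= 2 ^ n ->
  2 ^ stirling_v2 n k %| stirling1 (2 ^ n) k /\
  (~~ odd k -> exact_v2 (stirling_v2 n k) (stirling1 (2 ^ n) k)).

Lemma stirling_v2_spec1 : stirling_v2_spec 1.
Proof.
move=> k /andP[k0 k2].
have -> : stirling_v2 1 k = 0 by case: k k0 k2 => [|[|[|]]].
split=> [|ek]; first by rewrite dvd1n.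
have -> : k = 2 by case: k k0 k2 ek => [|[|[]]].
by rewrite /stirling1 rising_poly_linprod coef_linprod_top.
Qed.

Section StirlingV2Step.

Variable m : nat.
Hypothesis IH : stirling_v2_spec m.+1.

Lemma dvdn_coef_even_factors k : 0 < k <= 2 ^ m.+1 ->
  2 ^ stirling_v2 m.+2 k %| (even_factors m)`_k.
Proof.
move=> /andP[k0 kH]; rewrite coef_even_factors stirling_v2_lo // addnC expnD.
by apply: dvdn_mul => //; case: (@IH k ltac:(lia)).
Qed.

Lemma exact_v2_coef_even_factors k : 0 < k <= 2 ^ m.+1 -> ~~ odd k ->
  exact_v2 (stirling_v2 m.+2 k) ((even_factors m)`_k).
Proof.
move=> /andP[k0 kH] ek; rewrite coef_even_factors stirling_v2_lo // addnC.
apply: exact_v2M; first exact: exact_v2_exp2.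
by case: (@IH k ltac:(lia)) => _ /(_ ek).
Qed.

(* In O(x) = E(x + 1) the coefficient of x^l is C(2^(m+1), l) plus terms
   divisible by a higher power of 2. *)
Lemma exact_v2_coef_odd_factors_even l : ~~ odd l -> l <= 2 ^ m.+1 ->
  exact_v2 (oddpart_v2 m.+1 l) ((odd_factors m)`_l).
Proof.
move=> el lH.
rewrite coef_odd_factors_shift big_ord_recr /= coef_linprod_top mul1n addnC.
apply: exact_v2D.
  case: (posnP l) => [->|l0]; first by rewrite bin0 exact_v2_odd.
  rewrite /oddpart_v2 ifF ?(negbTE el); last by apply/eqP; lia.
  by apply: exact_v2_bin_exp2; rewrite l0.
apply: dvdn_sum => i _.
case: (posnP i) => [->|i0]; first by rewrite coef_even_factors0.
apply/dvdn_mulr/(dvdn_exp2W _ (dvdn_coef_even_factors _)); last by rewrite i0 /= ltnW.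
have := stirling_v2_ge (n := m.+1) (j := i) ltac:(by rewrite i0 /=).
rewrite /oddpart_v2; case: eqP => [_|l0]; first by lia.
by rewrite (negbTE el); have := v2_gt0 (x := l) ltac:(lia) el; lia.
Qed.

Lemma dvdn_coef_odd_pair_factors t : 0 < t < 2 ^ m ->
  2 ^ (m - v2 t) %| (odd_pair_factors m)`_t.
Proof.
move=> /andP[t0 tQ].
have el : ~~ odd (2 * t) by rewrite oddM.
have vt : oddpart_v2 m.+1 (2 * t) = m - v2 t.
  rewrite /oddpart_v2 ifF; last by apply/eqP; lia.
  by rewrite (negbTE el) v2M // -[X in v2 X]expn1 v2_exp2; lia.
have := exact_v2_dvdn (exact_v2_coef_odd_factors_even el ltac:(rewrite expnS; lia)).
rewrite vt coef_odd_factors_quad (bigD1 (Ordinal (leq_trans tQ (leqnSn _)))) //=.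
rewrite (_ : 2 * t - t = t); last by lia.
rewrite ltnNge leq_pmull //= subnn binn expn0 !muln1.
set S := (\sum_(_ < _ | _) _) => D.
(* every other summand carries a positive power of 2^(m+2) *)
suff DS : 2 ^ (m - v2 t) %| S by rewrite (dvdn_addl _ DS) in D.
apply: dvdn_sum => s /= ns.
case: ifP => sl; first by rewrite muln0.
apply: dvdn_mull.
case: (ltnP s t) => st; first by rewrite bin_small ?mul0n //; lia.
have ne : (s : nat) != t by apply: contraNneq ns => E; apply/eqP/val_inj.
apply/dvdn_mull/(dvdn_trans (n := 2 ^ m.+2)); first by rewrite dvdn_exp2l //; lia.
by apply: dvdn_exp (dvdnn _); lia.
Qed.

(* A term of degree l in (x(x + 2^(m+2)))^t with l odd contains the factor
   2^(m+2) an odd number q >= 1 of times, and C(t, q) is divisible by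
   2^(v2 t). *)
Lemma dvdn_coef_odd_factors_odd l : odd l -> 2 ^ (m.+1).*2 %| (odd_factors m)`_l.
Proof.
move=> ol; rewrite coef_odd_factors_quad; apply: dvdn_sum => t _.
case: ifP => lt; first by rewrite muln0.
case: (ltnP t (l - t)) => tl; first by rewrite bin_small ?mul0n ?muln0.
set q := t - (l - t).
have oq : odd q.
  have : odd (l + q) = false by rewrite (_ : l + q = 2 * t) ?oddM // /q; lia.
  by rewrite oddD ol; case: (odd q).
have t0 : 0 < t.
  by rewrite lt0n; apply/eqP => t0; move: tl ol; rewrite t0 subn0 leqn0 => /eqP ->.
have q0 : 0 < q by case: q oq.
rewrite (_ : 'C(t, l - t) = 'C(t, q)); last by rewrite /q bin_sub //; lia.
have dvdn_Nq : 2 ^ (m + 2) %| (2 ^ m.+2) ^ q.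
  by rewrite addn2; apply: dvdn_exp q0 (dvdnn _).
have dvdn_coef : 2 ^ m %| (odd_pair_factors m)`_t * 'C(t, q).
  have tQ : t <= 2 ^ m by have := ltn_ord t; lia.
  case: (eqVneq (t : nat) (2 ^ m)) => tE.
    rewrite tE /odd_pair_factors coef_linprod_top mul1n -{1}(v2_exp2 m) -tE.
    exact: dvdn_exp2_v2_bin t0 oq.
  have vt : v2 t <= m by apply: v2_leq_exp2.
  apply: (dvdn_exp2W (_ : m <= (m - v2 t) + v2 t)); first by lia.
  apply: dvdn_exp2M; last exact: dvdn_exp2_v2_bin t0 oq.
  by apply: dvdn_coef_odd_pair_factors; rewrite t0 /=; lia.
by rewrite mulnA (_ : (m.+1).*2 = m + (m + 2)); [apply: dvdn_exp2M | lia].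
Qed.

Lemma dvdn_coef_odd_factors l : 2 ^ oddpart_v2 m.+1 l %| (odd_factors m)`_l.
Proof.
case: (ltnP (2 ^ m.+1) l) => lH; first by rewrite /odd_factors coef_linprod_gt.
case: (boolP (odd l)) => ol.
  rewrite /oddpart_v2 ifF ?ol; last by apply/eqP => l0; move: ol; rewrite l0.
  exact: dvdn_coef_odd_factors_odd.
exact: exact_v2_dvdn (exact_v2_coef_odd_factors_even ol lH).
Qed.

Lemma dvdn_conv_term k j : 0 < k <= 2 ^ m.+2 -> j <= k ->
  let c := (even_factors m)`_j * (odd_factors m)`_(k - j) in
  2 ^ stirling_v2 m.+2 k %| c /\
  (~~ odd k -> j != minn k (2 ^ m.+1) -> 2 ^ (stirling_v2 m.+2 k).+1 %| c).
Proof.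
move=> /andP[k0 kN] jk c.
case: (posnP j) => [j0|j0]; first by rewrite /c j0 coef_even_factors0 mul0n dvdn0.
case: (leqP j (2 ^ m.+1)) => jH.
  case: (leqP (k - j) (2 ^ m.+1)) => kjH; last first.
    by rewrite /c /odd_factors coef_linprod_gt // muln0 dvdn0.
  have dvdn_c : 2 ^ (stirling_v2 m.+2 j + oddpart_v2 m.+1 (k - j)) %| c.
    apply: dvdn_exp2M; last exact: dvdn_coef_odd_factors.
    by apply: dvdn_coef_even_factors; rewrite j0.
  have [le_conv lt_conv] := stirling_v2_conv (ltac:(lia) : 0 < j <= k) kN jH kjH.
  by split=> [|ek jk0]; apply: dvdn_exp2W dvdn_c; last exact: lt_conv.
by rewrite /c /even_factors coef_linprod_gt // mul0n dvdn0.
Qed.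

Lemma exact_v2_conv_term_min k : 0 < k <= 2 ^ m.+2 -> ~~ odd k ->
  exact_v2 (stirling_v2 m.+2 k)
    ((even_factors m)`_(minn k (2 ^ m.+1)) * (odd_factors m)`_(k - minn k (2 ^ m.+1))).
Proof.
move=> /andP[k0 kN] ek.
case: (leqP k (2 ^ m.+1)) => kH.
  rewrite subnn -[stirling_v2 m.+2 k]addn0; apply: exact_v2M.
    by apply: exact_v2_coef_even_factors; rewrite ?k0.
  by have := exact_v2_coef_odd_factors_even (l := 0) isT (leq0n _).
rewrite coef_linprod_top mul1n.
have a0 : 0 < k - 2 ^ m.+1 <= 2 ^ m.+1 by rewrite expnS in kN; lia.
have ea : ~~ odd (k - 2 ^ m.+1).
  by rewrite oddB ?(negbTE ek) ?(negbTE (exp2_even _)) //; lia.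
have := stirling_v2_hi_even a0 ea; rewrite (_ : 2 ^ m.+1 + (k - 2 ^ m.+1) = k); last by lia.
by move=> ->; apply: exact_v2_coef_odd_factors_even => //; lia.
Qed.

Lemma stirling_v2_specSS : stirling_v2_spec m.+2.
Proof.
move=> k kN; rewrite /stirling1 rising_poly_even_odd coefM_nat; split.
  by apply: dvdn_sum => j _; have [] := dvdn_conv_term kN (ltn_ord j).
move=> ek; have j0k : minn k (2 ^ m.+1) < k.+1 by rewrite ltnS geq_minl.
rewrite (bigD1 (Ordinal j0k)) //=; apply: exact_v2D; first exact: exact_v2_conv_term_min.
apply: dvdn_sum => j nj; have [_ lt_term] := dvdn_conv_term kN (ltn_ord j).
by apply: lt_term => //; apply: contraNneq nj => E; apply/eqP/val_inj.
Qed.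

End StirlingV2Step.

Lemma stirling_v2P n : stirling_v2_spec n.+1.
Proof.
elim: n => [|n IH]; first exact: stirling_v2_spec1.
exact: stirling_v2_specSS.
Qed.

Lemma v2_stirling1_exp2 n k : ~~ odd k -> 0 < k <= 2 ^ n.+1 ->
  v2 (stirling1 (2 ^ n.+1) k) = stirling_v2 n.+1 k.
Proof. by move=> ek /stirling_v2P[_ /(_ ek) /exact_v2E]. Qed.

Local Open Scope ring_scope.

Theorem mainTheorem10 (n i : nat) :
  (2 <= n)%N -> odd i -> (3 <= i)%N -> (i <= 2 ^ n - 1)%N ->
  (v2 (stirling1 (2 ^ n) (i - 1)))%:Z - (2 * n)%:Z + 4
    <= (v2 (stirling1 (2 ^ n) (i + 1)))%:Z.
Proof.
case: n => [|[|n]] // _ oi i3 iN.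
have ei1 : ~~ odd (i - 1) by rewrite oddB ?oi //; lia.
have ei2 : ~~ odd (i + 1) by rewrite oddD oi.
rewrite !v2_stirling1_exp2 //; try lia.
have := stirling_v2_add2 ei1 (ltac:(lia) : (2 <= i - 1)%N) (ltac:(lia) : (i - 1 + 2 <= 2 ^ n.+2)%N).
by rewrite (_ : (i - 1 + 2 = i + 1)%N); lia.
Qed.
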